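(* Let $A$ and $B$ be $\Bbbk$-algebras admitting normalized nearly Frobenius coproducts $\Delta_A$ and $\Delta_B$. Then (1) $C=A\times B$ admits a normalized nearly Frobenius coproduct, namely the one determined by $\Delta(1_C)=\sum(a_1,0)\otimes(a_2,0)+\sum(0,b_1)\otimes(0,b_2)$ where $\Delta_A(1_A)=\sum a_1\otimes a_2$ and $\Delta_B(1_B)=\sum b_1\otimes b_2$; and (2) $D=A\otimes B$ admits a normalized nearly Frobenius coproduct, namely $\Delta_D=\tau\circ(\Delta_A\otimes\Delta_B)$, where $\tau:(A\otimes A)\otimes(B\otimes B)\to(A\otimes B)\otimes(A\otimes B)$ is the transposition $a\otimes a'\otimes b\otimes b'\mapsto a\otimes b\otimes a'\otimes b'$.
   Context: Algebras are associative and unital over a field $\Bbbk$, tensor products over $\Bbbk$, $m$ denotes multiplication. A nearly Frobenius coproduct on $A$ is a $\Bbbk$-linear map $\Delta:A\to A\otimes A$ with $\Delta\circ m=(1\otimes m)\circ(\Delta\otimes 1)=(m\otimes 1)\circ(1\otimes\Delta)$ (an $A$-bimodule morphism). It is normalized if $m\circ\Delta=\operatorname{Id}_A$. *)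

From HB Require Import structures.
From mathcomp Require Import all_boot all_algebra.
Set Implicit Arguments. Unset Strict Implicit. Unset Printing Implicit Defensive.
Import GRing.Theory.
Local Open Scope ring_scope.

Definition lin (K : fieldType) (U W : lmodType K) (g : U -> W) : Prop :=
  forall (c : K) (u v : U), g (c *: u + v) = c *: g u + g v.

Definition bilin (K : fieldType) (U V W : lmodType K) (f : U -> V -> W) : Prop :=
  (forall v : V, lin (fun u : U => f u v)) /\ (forall u : U, lin (f u)).

Definition is_tensor (K : fieldType) (U V T : lmodType K) (t : U -> V -> T) : Prop :=
  bilin t /\
  forall (W : lmodType K) (f : U -> V -> W), bilin f ->
    (exists g : T -> W, lin g /\ forall u v, g (t u v) = f u v) /\
    (forall g1 g2 : T -> W, lin g1 -> lin g2 ->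
       (forall u v, g1 (t u v) = f u v) -> (forall u v, g2 (t u v) = f u v) ->
       forall x, g1 x = g2 x).

(* Nearly Frobenius coproduct Delta : A -> A (x) A, where A (x) A is
   realized by the tensor product (T, t).  The identities
     Delta o m = (1 (x) m) o (Delta (x) 1) = (m (x) 1) o (1 (x) Delta)
   of linear maps A (x) A -> A (x) A are stated on the spanning pure
   tensors x (x) y.  The maps (1 (x) m)(- (x) y) and (m (x) 1)(x (x) -)
   on A (x) A are the (unique) linear maps rho, lambda with
   rho (a (x) b) = a (x) b y and lambda (a (x) b) = x a (x) b. *)
Definition nearly_frobenius (K : fieldType) (A : algType K) (T : lmodType K)
    (t : A -> A -> T) (Delta : A -> T) : Prop :=
  lin Delta /\
  (forall (y : A) (rho : T -> T), lin rho ->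
     (forall a b : A, rho (t a b) = t a (b * y)) ->
     forall x : A, Delta (x * y) = rho (Delta x)) /\
  (forall (x : A) (lam : T -> T), lin lam ->
     (forall a b : A, lam (t a b) = t (x * a) b) ->
     forall y : A, Delta (x * y) = lam (Delta y)).

(* Normalized: m o Delta = Id_A, where m : A (x) A -> A is the (unique)
   linear map with m (a (x) b) = a * b. *)
Definition normalized (K : fieldType) (A : algType K) (T : lmodType K)
    (t : A -> A -> T) (Delta : A -> T) : Prop :=
  forall mu : T -> A, lin mu -> (forall a b : A, mu (t a b) = a * b) ->
    forall x : A, mu (Delta x) = x.

Definition normalized_nearly_frobenius (K : fieldType) (A : algType K)
    (T : lmodType K) (t : A -> A -> T) (Delta : A -> T) : Prop :=
  nearly_frobenius t Delta /\ normalized t Delta.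

(* Everything is checked on pure tensors, where the universal property forces
   linear maps to agree.  In A x B the coproduct is Delta_A + Delta_B pushed
   into the corners A x 0 and 0 x B; multiplication by y acts on a corner
   only through the corresponding component of y, so each corner inherits the
   bimodule identities and the counit property from A or B.  In A (x) B,
   multiplication by a pure tensor a (x) b is (.a) (x) (.b), so
   tau o (Delta_A (x) Delta_B) intertwines it with the corresponding operator on
   (A (x) B) (x) (A (x) B); a general multiplier is a linear combination of pure
   ones, and both sides of the identity are linear in it. *)

From mathcomp Require Import all_boot all_algebra.
From Stdlib Require Import ClassicalEpsilon.

Set Implicit Arguments.
Unset Strict Implicit.
Unset Printing Implicit Defensive.
Import GRing.Theory.
Local Open Scope ring_scope.

Section Linear.
Variable K : fieldType.
Implicit Types U V W : lmodType K.

Lemma lin_id U : lin (fun u : U => u).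
Proof. by []. Qed.

Lemma lin0 U W (g : U -> W) : lin g -> g 0 = 0.
Proof.
move=> lg; have := lg 1 0 0; rewrite !scale1r addr0 => /(congr1 (fun w => w - g 0)).
by rewrite addrK subrr.
Qed.

Lemma linD U W (g : U -> W) : lin g -> forall u v, g (u + v) = g u + g v.
Proof. by move=> lg u v; have := lg 1 u v; rewrite !scale1r. Qed.

Lemma lin_sum U W (g : U -> W) (I : Type) (s : seq I) (F : I -> U) :
  lin g -> g (\sum_(i <- s) F i) = \sum_(i <- s) g (F i).
Proof.
move=> lg; elim: s => [|i s IHs]; first by rewrite !big_nil (lin0 lg).
by rewrite !big_cons (linD lg) IHs.
Qed.

Lemma lin_comp U V W (g : V -> W) (h : U -> V) : lin g -> lin h -> lin (fun u => g (h u)).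
Proof. by move=> lg lh c u v; rewrite lh lg. Qed.

Lemma bilin_comp U V U' V' W W' (f : U -> V -> W) (h : U' -> U) (k : V' -> V)
    (g : W -> W') :
  bilin f -> lin h -> lin k -> lin g -> bilin (fun u v => g (f (h u) (k v))).
Proof.
move=> [fl fr] lh lk lg; split=> [v|u] c x y; first by rewrite lh fl lg.
by rewrite lk fr lg.
Qed.

Lemma bilin_mul (A : algType K) : bilin (fun a b : A => a * b).
Proof. by split=> [b|a] c x y; rewrite ?mulrDl ?mulrDr -?scalerAl -?scalerAr. Qed.

End Linear.

Arguments lin_id {K U}.

Section Tensor.
Variable K : fieldType.
Implicit Types P Q U V W X Y T : lmodType K.

Lemma tensor_lift U V T W (t : U -> V -> T) (f : U -> V -> W) :
  is_tensor t -> bilin f -> exists g : T -> W, lin g /\ forall u v, g (t u v) = f u v.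
Proof. by case=> _ univ bf; case: (univ _ _ bf). Qed.

Lemma tensor_ext U V T W (t : U -> V -> T) (g1 g2 : T -> W) :
  is_tensor t -> lin g1 -> lin g2 -> (forall u v, g1 (t u v) = g2 (t u v)) -> g1 =1 g2.
Proof.
move=> [bt univ] lg1 lg2 E.
have [_ uniq] := univ _ _ (bilin_comp bt lin_id lin_id lg1).
by apply: uniq => // u v; rewrite E.
Qed.

Lemma bilin_tensor2_ext P1 Q1 T1 P2 Q2 T2 W (t1 : P1 -> Q1 -> T1) (t2 : P2 -> Q2 -> T2)
    (f g : T1 -> T2 -> W) :
  is_tensor t1 -> is_tensor t2 -> bilin f -> bilin g ->
  (forall p1 q1 p2 q2, f (t1 p1 q1) (t2 p2 q2) = g (t1 p1 q1) (t2 p2 q2)) ->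
  forall z1 z2, f z1 z2 = g z1 z2.
Proof.
move=> ht1 ht2 [fl fr] [gl gr] E z1.
apply: (tensor_ext ht2 (fr z1) (gr z1)) => p2 q2.
exact: (tensor_ext ht1 (fl (t2 p2 q2)) (gl (t2 p2 q2))).
Qed.

(* The operator induced on [T] by [f y] depends linearly on [y], so an
   intertwining relation that holds for pure tensors [y] holds for all [y]. *)
Lemma intertwine_span X Y T P Q U V (Delta : X -> T) (act : Y -> X -> X)
    (t : P -> Q -> T) (f : Y -> P -> Q -> T) (d : U -> V -> Y) :
  is_tensor t -> is_tensor d -> lin Delta ->
  (forall w, lin (act^~ w)) -> (forall y, bilin (f y)) ->
  (forall p q, lin (fun y => f y p q)) ->
  (forall u v rho, lin rho -> (forall p q, rho (t p q) = f (d u v) p q) ->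
     forall w, Delta (act (d u v) w) = rho (Delta w)) ->
  forall y rho, lin rho -> (forall p q, rho (t p q) = f y p q) ->
    forall w, Delta (act y w) = rho (Delta w).
Proof.
move=> ht hd lDelta lact bf lf pure y rho lrho rhoE w.
have [R RE] := choice _ (fun y => tensor_lift ht (bf y)).
have R_lin y' : lin (R y') := (RE y').1.
have R_lin_param z : lin (fun y' => R y' z).
  move=> c y1 y2; apply: (tensor_ext (g2 := fun z => c *: R y1 z + R y2 z) ht) => //.
    move=> k u v; rewrite (R_lin y1) (R_lin y2) !scalerDr !scalerA.
    by rewrite [c * k]mulrC addrACA.
  by move=> p q; rewrite !(RE _).2 lf.
have -> : rho (Delta w) = R y (Delta w).
  by apply: (tensor_ext ht lrho (R_lin y)) => p q; rewrite rhoE (RE y).2.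
apply: (tensor_ext (g1 := fun y => Delta (act y w)) hd (lin_comp lDelta (lact w))
  (R_lin_param _)).
by move=> u v; apply: pure; [exact: R_lin | exact: (RE _).2].
Qed.

End Tensor.

Section TensorSquare.
Variables (K : fieldType) (A : algType K) (T : lmodType K) (t : A -> A -> T).
Hypothesis ht : is_tensor t.

Lemma tensor_mul_lift : exists mu : T -> A, lin mu /\ forall a b, mu (t a b) = a * b.
Proof. exact: tensor_lift ht (bilin_mul A). Qed.

Lemma tensor_mulr_lift y :
  exists rho : T -> T, lin rho /\ forall a b, rho (t a b) = t a (b * y).
Proof.
exact: tensor_lift ht (bilin_comp ht.1 lin_id ((bilin_mul A).1 y) lin_id).
Qed.

Lemma tensor_mull_lift x :
  exists lam : T -> T, lin lam /\ forall a b, lam (t a b) = t (x * a) b.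
Proof.
exact: tensor_lift ht (bilin_comp ht.1 ((bilin_mul A).2 x) lin_id lin_id).
Qed.

End TensorSquare.

(* [e] embeds [A] as a corner of [C]: products with [e a] stay in the corner
   and see [y] only through [p y]. *)
Section Corner.
Variables (K : fieldType) (A C : algType K) (TA TC : lmodType K).
Variables (tA : A -> A -> TA) (tC : C -> C -> TC) (DeltaA : A -> TA).
Hypotheses (hTA : is_tensor tA) (hA : normalized_nearly_frobenius tA DeltaA).
Variables (e : A -> C) (p : C -> A).
Hypotheses (le : lin e) (pK : cancel e p).
Hypothesis e_mulr : forall a y, e a * y = e (a * p y).
Hypothesis e_mull : forall y a, y * e a = e (p y * a).
Variable iE : TA -> TC.
Hypotheses (liE : lin iE) (iE_t : forall a b, iE (tA a b) = tC (e a) (e b)).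

Lemma corner_mulr y rho : lin rho -> (forall u v, rho (tC u v) = tC u (v * y)) ->
  forall x, iE (DeltaA (x * p y)) = rho (iE (DeltaA x)).
Proof.
move=> lrho rhoE x; have [rhoA [lrhoA rhoAE]] := tensor_mulr_lift hTA (p y).
rewrite (hA.1.2.1 _ _ lrhoA rhoAE).
apply: (tensor_ext hTA (lin_comp liE lrhoA) (lin_comp lrho liE)) => a b.
by rewrite rhoAE !iE_t rhoE e_mulr.
Qed.

Lemma corner_mull x lam : lin lam -> (forall u v, lam (tC u v) = tC (x * u) v) ->
  forall y, iE (DeltaA (p x * y)) = lam (iE (DeltaA y)).
Proof.
move=> llam lamE y; have [lamA [llamA lamAE]] := tensor_mull_lift hTA (p x).
rewrite (hA.1.2.2 _ _ llamA lamAE).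
apply: (tensor_ext hTA (lin_comp liE llamA) (lin_comp llam liE)) => a b.
by rewrite lamAE !iE_t lamE e_mull.
Qed.

Lemma corner_counit mu : lin mu -> (forall u v, mu (tC u v) = u * v) ->
  forall a, mu (iE (DeltaA a)) = e a.
Proof.
move=> lmu muE a; have [muA [lmuA muAE]] := tensor_mul_lift hTA.
have -> : mu (iE (DeltaA a)) = e (muA (DeltaA a)).
  apply: (tensor_ext hTA (lin_comp lmu liE) (lin_comp le lmuA)) => a1 a2.
  by rewrite iE_t muE muAE e_mulr pK.
by rewrite (hA.2 _ lmuA muAE).
Qed.

End Corner.

Section Product.
Variables (K : fieldType) (A B : algType K).

Lemma lin_inl : lin (fun a : A => (a, 0 : B)).
Proof. by move=> c a a'; rewrite -[RHS]/(c *: a + a', c *: 0 + 0) scaler0 addr0. Qed.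

Lemma lin_inr : lin (fun b : B => (0 : A, b)).
Proof. by move=> c b b'; rewrite -[RHS]/(c *: 0 + 0, c *: b + b') scaler0 addr0. Qed.

Lemma inl_mulr (a : A) (y : A * B) : (a, 0) * y = (a * y.1, 0).
Proof. by congr pair; rewrite mul0r. Qed.

Lemma inl_mull (y : A * B) (a : A) : y * (a, 0) = (y.1 * a, 0).
Proof. by congr pair; rewrite mulr0. Qed.

Lemma inr_mulr (b : B) (y : A * B) : (0, b) * y = (0, b * y.2).
Proof. by congr pair; rewrite mul0r. Qed.

Lemma inr_mull (y : A * B) (b : B) : y * (0, b) = (0, y.2 * b).
Proof. by congr pair; rewrite mulr0. Qed.

End Product.

Section ProductCoproduct.
Variables (K : fieldType) (A B : algType K) (TA TB TC : lmodType K).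
Variables (tA : A -> A -> TA) (tB : B -> B -> TB) (tC : A * B -> A * B -> TC).
Variables (DeltaA : A -> TA) (DeltaB : B -> TB).
Hypotheses (hTA : is_tensor tA) (hTB : is_tensor tB).
Hypothesis hA : normalized_nearly_frobenius tA DeltaA.
Hypothesis hB : normalized_nearly_frobenius tB DeltaB.
Variables (iA : TA -> TC) (iB : TB -> TC).
Hypotheses (liA : lin iA) (iA_t : forall a a', iA (tA a a') = tC (a, 0) (a', 0)).
Hypotheses (liB : lin iB) (iB_t : forall b b', iB (tB b b') = tC (0, b) (0, b')).

Lemma prod_coproduct_normalized_nearly_frobenius :
  normalized_nearly_frobenius tC (fun x => iA (DeltaA x.1) + iB (DeltaB x.2)).
Proof.
split; [split; [|split] |].
- move=> c [a b] [a' b'] /=.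
  by rewrite hA.1.1 hB.1.1 liA liB scalerDr addrACA.
- move=> y rho lrho rhoE x.
  rewrite (linD lrho) -(corner_mulr hTA hA (@inl_mulr _ A B) liA iA_t lrho rhoE).
  by rewrite -(corner_mulr hTB hB (@inr_mulr _ A B) liB iB_t lrho rhoE).
- move=> x lam llam lamE y.
  rewrite (linD llam) -(corner_mull hTA hA (@inl_mull _ A B) liA iA_t llam lamE).
  by rewrite -(corner_mull hTB hB (@inr_mull _ A B) liB iB_t llam lamE).
move=> mu lmu muE [a b].
rewrite (linD lmu) (corner_counit (p := fst) hTA hA (@lin_inl _ A B) (fun=> erefl)
  (@inl_mulr _ A B) liA iA_t lmu muE).
rewrite (corner_counit (p := snd) hTB hB (@lin_inr _ A B) (fun=> erefl)
  (@inr_mulr _ A B) liB iB_t lmu muE).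
by congr pair; rewrite ?addr0 ?add0r.
Qed.

End ProductCoproduct.

Section TensorProductCoproduct.
Variables (K : fieldType) (A B D : algType K) (TA TB TD TAB : lmodType K).
Variables (tA : A -> A -> TA) (tB : B -> B -> TB) (tD : D -> D -> TD).
Variables (d : A -> B -> D) (tAB : TA -> TB -> TAB).
Hypotheses (hTA : is_tensor tA) (hTB : is_tensor tB) (hTD : is_tensor tD).
Hypotheses (hd : is_tensor d) (hTAB : is_tensor tAB).
Hypothesis dM : forall a a' b b', d (a * a') (b * b') = d a b * d a' b'.
Variables (DeltaA : A -> TA) (DeltaB : B -> TB).
Hypothesis hA : normalized_nearly_frobenius tA DeltaA.
Hypothesis hB : normalized_nearly_frobenius tB DeltaB.
Variables (tau : TAB -> TD) (DeltaAB : D -> TAB).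
Hypothesis ltau : lin tau.
Hypothesis tauE : forall a a' b b', tau (tAB (tA a a') (tB b b')) = tD (d a b) (d a' b').
Hypothesis lDeltaAB : lin DeltaAB.
Hypothesis DeltaABE : forall a b, DeltaAB (d a b) = tAB (DeltaA a) (DeltaB b).

Lemma tau_factor (UA UB W : lmodType K) (u : UA -> UB -> W)
    (PsiA : TA -> UA) (PsiB : TB -> UB) (Psi : TD -> W) :
  bilin u -> lin PsiA -> lin PsiB -> lin Psi ->
  (forall a a' b b', Psi (tD (d a b) (d a' b')) = u (PsiA (tA a a')) (PsiB (tB b b'))) ->
  forall zA zB, Psi (tau (tAB zA zB)) = u (PsiA zA) (PsiB zB).
Proof.
move=> bu lPsiA lPsiB lPsi PsiE; apply: (bilin_tensor2_ext hTA hTB).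
- exact: bilin_comp hTAB.1 lin_id lin_id (lin_comp lPsi ltau).
- exact: bilin_comp bu lPsiA lPsiB lin_id.
by move=> a a' b b'; rewrite tauE PsiE.
Qed.

Lemma tensor_coproduct_intertwine (phiA : A -> A) (PhiA : TA -> TA)
    (phiB : B -> B) (PhiB : TB -> TB) (phi : D -> D) (Phi : TD -> TD) :
  lin PhiA -> lin PhiB -> lin phi -> lin Phi ->
  (forall a, DeltaA (phiA a) = PhiA (DeltaA a)) ->
  (forall b, DeltaB (phiB b) = PhiB (DeltaB b)) ->
  (forall a b, phi (d a b) = d (phiA a) (phiB b)) ->
  (forall a a' b b',
     Phi (tD (d a b) (d a' b')) = tau (tAB (PhiA (tA a a')) (PhiB (tB b b')))) ->
  forall x, tau (DeltaAB (phi x)) = Phi (tau (DeltaAB x)).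
Proof.
move=> lPhiA lPhiB lphi lPhi DeltaA_phi DeltaB_phi phiE PhiE.
have lDelta := lin_comp ltau lDeltaAB.
apply: (tensor_ext hd (lin_comp lDelta lphi) (lin_comp lPhi lDelta)) => a b.
rewrite phiE !DeltaABE DeltaA_phi DeltaB_phi.
rewrite (tau_factor (u := fun zA zB => tau (tAB zA zB)) _ lPhiA lPhiB lPhi PhiE) //.
exact: bilin_comp hTAB.1 lin_id lin_id ltau.
Qed.

Lemma tensor_coproduct_mulr a' b' rho :
  lin rho -> (forall u v, rho (tD u v) = tD u (v * d a' b')) ->
  forall x, tau (DeltaAB (x * d a' b')) = rho (tau (DeltaAB x)).
Proof.
move=> lrho rhoE.
have [rhoA [lrhoA rhoAE]] := tensor_mulr_lift hTA a'.
have [rhoB [lrhoB rhoBE]] := tensor_mulr_lift hTB b'.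
apply: (tensor_coproduct_intertwine (phiA := fun a => a * a') (phiB := fun b => b * b')
  lrhoA lrhoB ((bilin_mul D).1 _) lrho
  (hA.1.2.1 _ _ lrhoA rhoAE) (hB.1.2.1 _ _ lrhoB rhoBE)).
  by move=> a b; rewrite dM.
by move=> a1 a2 b1 b2; rewrite rhoE -dM rhoAE rhoBE tauE.
Qed.

Lemma tensor_coproduct_mull a b lam :
  lin lam -> (forall u v, lam (tD u v) = tD (d a b * u) v) ->
  forall y, tau (DeltaAB (d a b * y)) = lam (tau (DeltaAB y)).
Proof.
move=> llam lamE.
have [lamA [llamA lamAE]] := tensor_mull_lift hTA a.
have [lamB [llamB lamBE]] := tensor_mull_lift hTB b.
apply: (tensor_coproduct_intertwine (phiA := fun a' => a * a') (phiB := fun b' => b * b')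
  llamA llamB ((bilin_mul D).2 _) llam
  (hA.1.2.2 _ _ llamA lamAE) (hB.1.2.2 _ _ llamB lamBE)).
  by move=> a' b'; rewrite dM.
by move=> a1 a2 b1 b2; rewrite lamE -dM lamAE lamBE tauE.
Qed.

Lemma tensor_coproduct_normalized : normalized tD (fun x => tau (DeltaAB x)).
Proof.
move=> mu lmu muE.
have [muA [lmuA muAE]] := tensor_mul_lift hTA.
have [muB [lmuB muBE]] := tensor_mul_lift hTB.
have mu_tau := tau_factor hd.1 lmuA lmuB lmu.
apply: (tensor_ext hd (lin_comp lmu (lin_comp ltau lDeltaAB)) lin_id) => a b.
rewrite DeltaABE mu_tau ?(hA.2 _ lmuA muAE) ?(hB.2 _ lmuB muBE) //.
by move=> a1 a2 b1 b2; rewrite muE muAE muBE dM.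
Qed.

Lemma tensor_coproduct_normalized_nearly_frobenius :
  normalized_nearly_frobenius tD (fun x => tau (DeltaAB x)).
Proof.
have lDelta := lin_comp ltau lDeltaAB.
split; [split; [exact: lDelta | split] | exact: tensor_coproduct_normalized].
- apply: (intertwine_span (act := fun y x => x * y) (f := fun y u v => tD u (v * y))
    hTD hd lDelta).
  + by move=> x; exact: (bilin_mul D).2.
  + by move=> y; exact: bilin_comp hTD.1 lin_id ((bilin_mul D).1 y) lin_id.
  + by move=> u v; exact: lin_comp (hTD.1.2 u) ((bilin_mul D).2 v).
  exact: tensor_coproduct_mulr.
apply: (intertwine_span (act := fun x y => x * y) (f := fun x u v => tD (x * u) v)
  hTD hd lDelta).
- by move=> y; exact: (bilin_mul D).1.
- by move=> x; exact: bilin_comp hTD.1 ((bilin_mul D).2 x) lin_id lin_id.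
- by move=> u v; exact: lin_comp (hTD.1.1 v) ((bilin_mul D).1 u).
exact: tensor_coproduct_mull.
Qed.

End TensorProductCoproduct.

Theorem proposition17 (K : fieldType) (A B : algType K)
    (* A (x) A and B (x) B *)
    (TA : lmodType K) (tA : A -> A -> TA) (TB : lmodType K) (tB : B -> B -> TB)
    (hTA : is_tensor tA) (hTB : is_tensor tB)
    (DeltaA : A -> TA) (DeltaB : B -> TB)
    (hA : normalized_nearly_frobenius tA DeltaA)
    (hB : normalized_nearly_frobenius tB DeltaB) :
  (* (1) C = A x B *)
  (forall (TC : lmodType K) (tC : (A * B)%type -> (A * B)%type -> TC),
     is_tensor tC ->
     forall (sA : seq (A * A)) (sB : seq (B * B)),
       DeltaA 1 = \sum_(p <- sA) tA p.1 p.2 ->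
       DeltaB 1 = \sum_(q <- sB) tB q.1 q.2 ->
       exists DeltaC : (A * B)%type -> TC,
         normalized_nearly_frobenius tC DeltaC /\
         DeltaC 1 = \sum_(p <- sA) tC (p.1, 0) (p.2, 0)
                    + \sum_(q <- sB) tC (0, q.1) (0, q.2)) /\
  (* (2) D = A (x) B with the tensor product algebra structure *)
  (forall (D : algType K) (d : A -> B -> D),
     is_tensor d ->
     d 1 1 = 1 ->
     (forall (a a' : A) (b b' : B), d (a * a') (b * b') = d a b * d a' b') ->
     forall (TD : lmodType K) (tD : D -> D -> TD), is_tensor tD ->
     forall (TAB : lmodType K) (tAB : TA -> TB -> TAB), is_tensor tAB ->
     (* tau : (A (x) A) (x) (B (x) B) -> (A (x) B) (x) (A (x) B) *)
     forall tau : TAB -> TD, lin tau ->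
     (forall (a a' : A) (b b' : B), tau (tAB (tA a a') (tB b b')) = tD (d a b) (d a' b')) ->
     (* DeltaA (x) DeltaB : A (x) B -> (A (x) A) (x) (B (x) B) *)
     forall DeltaAB : D -> TAB, lin DeltaAB ->
     (forall (a : A) (b : B), DeltaAB (d a b) = tAB (DeltaA a) (DeltaB b)) ->
     normalized_nearly_frobenius tD (fun x => tau (DeltaAB x))).
Proof.
split=> [TC tC hTC sA sB DeltaA1 DeltaB1 | D d hd _ dM TD tD hTD TAB tAB hTAB].
  have [iA [liA iA_t]] := tensor_lift (f := fun a a' : A => tC (a, 0) (a', 0)) hTA
    (bilin_comp hTC.1 (@lin_inl _ A B) (@lin_inl _ A B) lin_id).
  have [iB [liB iB_t]] := tensor_lift (f := fun b b' : B => tC (0, b) (0, b')) hTB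
    (bilin_comp hTC.1 (@lin_inr _ A B) (@lin_inr _ A B) lin_id).
  exists (fun x => iA (DeltaA x.1) + iB (DeltaB x.2)).
  split.
    exact (prod_coproduct_normalized_nearly_frobenius hTA hTB hA hB liA iA_t liB iB_t).
  rewrite /= DeltaA1 DeltaB1 (lin_sum _ _ liA) (lin_sum _ _ liB).
  by congr (_ + _); apply: eq_bigr => q _; rewrite ?iA_t ?iB_t.
move=> tau ltau tauE DeltaAB lDeltaAB DeltaABE.
exact (tensor_coproduct_normalized_nearly_frobenius hTA hTB hTD hd hTAB dM hA hB
  ltau tauE lDeltaAB DeltaABE).
Qed.
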